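(* Let $k$ be a positive integer. The polynomial $P_k(1,\beta,0)\in\mathbb Q[\beta]$ has degree $\le\left\lfloor\frac{k^2}4\right\rfloor$.
   Context: Define $\widetilde c_n\in\mathbb Q[\beta]$ by $\widetilde c_0=2$, $\widetilde c_1=1$, $(n+1)\widetilde c_{n+1}=\widetilde c_n+\frac\beta4(n-1)\widetilde c_{n-1}$ for $n\ge1$, and $\widetilde c_n=0$ for $n<0$. $P_k(1,\beta,0)$ is the $k\times k$ determinant with $(j,l)$ entry $\widetilde c_{k-2(j-1)+(l-1)}$, $1\le j,l\le k$. *)

(* polynomials over rat; beta is the indeterminate 'X. *)
From mathcomp Require Import all_boot all_order all_algebra.
Set Implicit Arguments. Unset Strict Implicit. Unset Printing Implicit Defensive.
Import GRing.Theory Num.Theory.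
Local Open Scope ring_scope.

(* pair (c_n, c_{n+1}) for n : nat, with
   c_0 = 2, c_1 = 1, (n+1) c_{n+1} = c_n + (beta/4)(n-1) c_{n-1}, n >= 1 *)
Fixpoint ctilde_pair (n : nat) : {poly rat} * {poly rat} :=
  match n with
  | 0%N => (2%:P, 1%:P)
  | m.+1 =>
      let: (a, b) := ctilde_pair m in
      (* a = c_m, b = c_{m+1}; compute c_{m+2} with n := m+1 *)
      (b, (m.+2%:R)^-1 *: (b + (4%:R^-1 * m%:R) *: ('X * a)))
  end.

Definition ctilde_nat (n : nat) : {poly rat} := (ctilde_pair n).1.

Definition ctilde (n : int) : {poly rat} :=
  match n with
  | Posz m => ctilde_nat m
  | Negz _ => 0
  end.

(* P_k(1, beta, 0): k x k determinant with (j,l) entry c_{k - 2(j-1) + (l-1)}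
   (1-indexed); with 0-indexed j l : 'I_k the index is k - 2j + l. *)
Definition Pk (k : nat) : {poly rat} :=
  \det (\matrix_(j < k, l < k) ctilde (k%:Z - 2 * j%:Z + l%:Z)).

From mathcomp Require Import all_boot all_order all_algebra perm zify.
Import GRing.Theory.

Set Implicit Arguments.
Unset Strict Implicit.
Unset Printing Implicit Defensive.

(* Every [c_n] has degree at most [n/2], so a Leibniz term [prod_j c_(k - 2j + s j)]
   has degree at most [sum_j (k + s j - 2j)/2 = sum_j ((k + s j)/2 - j)].  Reindexing
   along the permutation [s] shows this sum does not depend on [s]; for [s = id] it is
   [sum_(j < k) (k - j)/2 = floor(k^2/4)]. *)

Lemma sum_half_rev k : \sum_(i < k) (k - i)./2 = (k * k)./2./2.
Proof.
elim: k => [|k IHk]; first by rewrite big_ord0.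
rewrite big_ord_recl /=.
under eq_bigr => i _ do rewrite /bump leq0n add1n subSS.
rewrite IHk; have [j ->] : exists j, k = j.*2 + odd k by exists k./2; rewrite addnC odd_double_half.
case: (odd _) => /=; nia.
Qed.

Lemma sum_half_perm k (s : 'S_k) :
    (forall i : 'I_k, 2 * i <= k + s i) ->
  \sum_(i < k) (k + s i - 2 * i)./2 = (k * k)./2./2.
Proof.
move=> le_2i; rewrite -sum_half_rev; apply: (@addIn (\sum_(i < k) (i : nat))).
rewrite -!big_split /=.
transitivity (\sum_(i < k) (k + s i)./2); first by apply: eq_bigr => i _; have := le_2i i; lia.
rewrite [RHS](reindex_inj (@perm_inj _ s)) /=.
by apply: eq_bigr => i _; have := ltn_ord (s i); lia.
Qed.

Local Open Scope ring_scope.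

Section PolySize.
Variable R : nzRingType.

Lemma size_polyM_leq_add (p q : {poly R}) a b :
  (size p <= a.+1)%N -> (size q <= b.+1)%N -> (size (p * q)%R <= (a + b).+1)%N.
Proof.
move=> le_p le_q; apply: leq_trans (size_polyMleq p q) _.
by move: le_p le_q; lia.
Qed.

Lemma size_prod_leq_sum (I : Type) (r : seq I) (F : I -> {poly R}) (d : I -> nat) :
    (forall i, size (F i) <= (d i).+1)%N ->
  (size (\prod_(i <- r) F i)%R <= (\sum_(i <- r) d i).+1)%N.
Proof.
move=> le_F; elim/big_rec2: _ => [|i n p _ le_p]; first by rewrite size_poly1.
exact: size_polyM_leq_add.
Qed.

Lemma size_det_leq k (A : 'M[{poly R}]_k) n :
    (forall s : 'S_k, size (\prod_i A i (s i))%R <= n.+1)%N ->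
  (size (\det A) <= n.+1)%N.
Proof.
move=> le_term; rewrite /determinant.
apply: (big_ind (fun p : {poly R} => size p <= n.+1)%N) => [|p q le_p le_q|s _].
- by rewrite size_poly0.
- by apply: leq_trans (size_polyD p q) _; rewrite geq_max le_p le_q.
- by rewrite size_Msign.
Qed.

End PolySize.

Lemma size_ctilde_pair n :
  (size (ctilde_pair n).1 <= (n./2).+1)%N /\ (size (ctilde_pair n).2 <= (n.+1./2).+1)%N.
Proof.
elim: n => [|n]; first by rewrite /= !size_polyC; split; case: (_ != 0).
rewrite /=; case: (ctilde_pair n) => a b /= [le_a le_b]; split=> //.
apply: leq_trans (size_scale_leq _ _) _; apply: leq_trans (size_polyD _ _) _.
rewrite geq_max (leq_trans le_b) /=; last by lia.
apply: leq_trans (size_scale_leq _ _) _.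
have le_Xa := @size_polyM_leq_add _ 'X a 1 n./2 (eq_leq (size_polyX _)) le_a.
by apply: leq_trans le_Xa _; rewrite add1n.
Qed.

Lemma size_ctilde_nat n : (size (ctilde_nat n) <= (n./2).+1)%N.
Proof. by case: (size_ctilde_pair n). Qed.

Lemma size_prod_ctilde_perm k (s : 'S_k) :
  (size (\prod_(i < k) ctilde (k%:Z - 2 * i%:Z + (s i)%:Z))%R <= ((k * k)./2./2).+1)%N.
Proof.
have [/existsP[i lt_k_2i] | /existsPn no_neg_index] := boolP [exists i : 'I_k, k + s i < 2 * i]%N.
  rewrite (bigD1 i) //=.
  have -> : ctilde (k%:Z - 2 * i%:Z + (s i)%:Z) = 0.
    by case E: (_ - _ + _) => [m|//]; move: E lt_k_2i; lia.
  by rewrite mul0r size_poly0.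
have le_2i (i : 'I_k) : (2 * i <= k + s i)%N by rewrite leqNgt no_neg_index.
rewrite -(sum_half_perm le_2i).
rewrite (eq_bigr (fun i : 'I_k => ctilde_nat (k + s i - 2 * i))) => [|i _].
  by apply: size_prod_leq_sum => i; apply: size_ctilde_nat.
by rewrite (_ : _ - _ + _ = Posz (k + s i - 2 * i)) //; have := le_2i i; lia.
Qed.

Theorem lemma4p7 (k : nat) (hk : (0 < k)%N) :
  (size (Pk k) <= (k * k)./2./2 + 1)%N.
Proof.
rewrite addn1; apply: size_det_leq => s.
under eq_bigr => i _ do rewrite mxE.
exact: size_prod_ctilde_perm.
Qed.
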